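(* Every point $(d_1,d_3)\in S_{13}$ satisfies $d_1\le 3d_3+3/8$.
   Context: For a finite graph $G$ and a $k$-vertex graph $H$, $d(H,G)$ is the probability that a uniformly random $k$-element subset of $V(G)$ induces a subgraph isomorphic to $H$. For $k\in\{0,1,2,3\}$ let $H_k$ be the 3-vertex graph with exactly $k$ edges. Let $S\subseteq\mathbb{R}^4$ be the set of all $(d_0,d_1,d_2,d_3)$ such that for every $\varepsilon>0$ and every $n\in\mathbb{N}$ there is a graph $G$ with at least $n$ vertices satisfying $|d(H_k,G)-d_k|\le\varepsilon$ for $k=0,1,2,3$. For $i<j$, $S_{ij}=\{(d_i,d_j):(d_0,d_1,d_2,d_3)\in S\}$. *)

From mathcomp Require Import all_boot.
From Stdlib Require Import Reals.
Set Implicit Arguments. Unset Strict Implicit.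

Definition simple_graph (n : nat) (e : rel 'I_n) : Prop :=
  symmetric e /\ irreflexive e.

(* Number of ORDERED pairs (x,y) with x,y in A and xy an edge
   (= twice the number of edges of the subgraph induced on A). *)
Definition ord_edge_pairs (n : nat) (e : rel 'I_n) (A : {set 'I_n}) : nat :=
  #|[set p : 'I_n * 'I_n | (p.1 \in A) && (p.2 \in A) && e p.1 p.2]|.

(* Number of 3-element vertex subsets inducing a graph with exactly k edges,
   i.e. inducing a copy of H_k. *)
Definition ind3_count (n : nat) (e : rel 'I_n) (k : nat) : nat :=
  #|[set A : {set 'I_n} | (#|A| == 3) && (ord_edge_pairs e A == (2 * k)%N)]|.

Definition dens3 (n : nat) (e : rel 'I_n) (k : nat) : R :=
  (INR (ind3_count e k) / INR 'C(n, 3))%R.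

Definition inS (d0 d1 d2 d3 : R) : Prop :=
  forall eps : R, (0 < eps)%R -> forall N : nat,
    exists (n : nat) (e : rel 'I_n),
      (N <= n)%N /\ simple_graph e /\
      (Rabs (dens3 e 0 - d0) <= eps)%R /\
      (Rabs (dens3 e 1 - d1) <= eps)%R /\
      (Rabs (dens3 e 2 - d2) <= eps)%R /\
      (Rabs (dens3 e 3 - d3) <= eps)%R.

Definition inS13 (d1 d3 : R) : Prop := exists d0 d2 : R, inS d0 d1 d2 d3.

(* Weight every ordered triple (x, y, z) of distinct vertices by
   w(x; y, z) = [xy] + [xz] - 4 [xy][xz], a weight seen from the apex x.
   The three apex weights of a triple add up to 2 if it spans exactly one
   edge, to -6 if it spans a triangle and to 0 otherwise, so summing over all
   ordered triples gives 6 (2 I1 - 6 I3) = 3 \sum w, where I_k counts the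
   induced copies of H_k.  For a fixed apex of degree d the weights add up to
   2 n d - 4 d^2 <= n^2 / 4, hence 16 I1 <= 48 I3 + n^3.  Dividing by
   C(n, 3) ~ n^3 / 6 yields d1 <= 3 d3 + 3/8 + 3/n for n >= 4, and the error
   term disappears in the limit. *)

From Stdlib Require Import Reals Lra Psatz.
From mathcomp Require Import all_boot all_order all_algebra zify ring.
(* Imported after [ring]: [field] must be the Stdlib tactic on [R], while
   [ring] is used on [int]. *)
From Stdlib Require Import Field.
Set Implicit Arguments. Unset Strict Implicit. Unset Printing Implicit Defensive.

Section OrderedTriples.
Variable T : finType.
Implicit Types (t : T * T * T) (A : {set T}).

Definition distinct3 t := [&& t.1.1 != t.1.2, t.1.1 != t.2 & t.1.2 != t.2].
Definition triple_set t : {set T} := [set t.1.1; t.1.2; t.2].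

Lemma card_triple_set t : distinct3 t -> #|triple_set t| = 3.
Proof.
case: t => [[x y] z] /and3P[/= xy xz yz].
by rewrite /triple_set /= setUC cardsU1 cards2 xy !inE negb_or !(eq_sym z) xz yz.
Qed.

Lemma sum_triple_set (f : T -> nat) x y z : distinct3 (x, y, z) ->
  \sum_(i in triple_set (x, y, z)) f i = f x + f y + f z.
Proof.
case/and3P=> /= xy xz yz; rewrite /triple_set /= -setUA.
rewrite big_setU1 /=; last by rewrite !inE negb_or xy xz.
by rewrite big_setU1 ?inE //= big_set1 addnA.
Qed.

Lemma card_distinct3_sub A :
  #|[set t | distinct3 t & triple_set t \subset A]| = #|A| ^_ 3.
Proof.
pose tup t : 3.-tuple T := [tuple t.1.1; t.1.2; t.2].
have tup_inj : injective tup by move=> [[? ?] ?] [[? ?] ?] [-> -> ->].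
rewrite -card_uniq_tuples -(card_imset _ tup_inj); congr #|pred_of_set _|.
apply/setP=> u; rewrite inE; apply/imsetP/andP.
  move=> [[[x y] z]]; rewrite inE /distinct3 /triple_set /= => /andP[dxyz sA] ->.
  have inA q : q \in [set x; y; z] -> q \in A by move/(subsetP sA).
  rewrite /= !inE !andbT negb_or -andbA dxyz; split=> //.
  by change [&& x \in A, y \in A & z \in A]; rewrite !inA // !inE eqxx ?orbT.
case: u => -[|x [|y [|z []]]] //= ? [/and4P[xA yA zA _]].
rewrite !inE !andbT negb_or -andbA => dxyz.
exists (x, y, z); last exact: val_inj.
rewrite inE /distinct3 /= dxyz; apply/subsetP=> q; rewrite !inE.
by rewrite -orbA => /or3P[] /eqP->.
Qed.

Lemma card_distinct3_fiber A : #|A| = 3 ->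
  #|[pred t | distinct3 t & triple_set t == A]| = 6.
Proof.
move=> A3; rewrite -[6]/(3 ^_ 3) -{1}A3 -card_distinct3_sub; apply: eq_card => t.
rewrite !inE; have [dt|] //= := boolP (distinct3 t).
by rewrite eqEcard card_triple_set // A3 leqnn andbT.
Qed.

Lemma sum_distinct3_triple_set (F : {set T} -> nat) :
  \sum_(t | distinct3 t) F (triple_set t) = 6 * \sum_(A : {set T} | #|A| == 3) F A.
Proof.
rewrite (partition_big triple_set (fun A : {set T} => #|A| == 3)); last first.
  by move=> t /card_triple_set ->.
rewrite big_distrr; apply: eq_bigr => A /eqP A3.
rewrite (eq_bigr (fun=> F A)) => [|t /andP[_ /eqP->] //].
by rewrite sum_nat_const card_distinct3_fiber // mulnC.
Qed.

Lemma sum_distinct3E (V : nmodType) (F : T * T * T -> V) :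
  (\sum_(t | distinct3 t) F t =
   \sum_x \sum_(y | x != y) \sum_(z | (x != z) && (y != z)) F (x, y, z))%R.
Proof.
rewrite pair_big_dep /= pair_big_dep /=.
by apply: eq_big => [[[x y] z]|[[x y] z] _].
Qed.

Lemma reindex_distinct3 (V : nmodType) (F : T * T * T -> V) s :
  injective s -> (forall t, distinct3 (s t) = distinct3 t) ->
  (\sum_(t | distinct3 t) F (s t) = \sum_(t | distinct3 t) F t)%R.
Proof.
move=> s_inj ds; rewrite [RHS](reindex_inj s_inj).
by apply: eq_bigl => t; rewrite ds.
Qed.

Lemma sum_distinct3_swap (V : nmodType) (F : T * T * T -> V) :
  (\sum_(t | distinct3 t) F (t.1.2, t.1.1, t.2) = \sum_(t | distinct3 t) F t)%R.
Proof.
apply: reindex_distinct3 => [[[? ?] ?] [[? ?] ?] [-> -> ->] //|[[x y] z]].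
rewrite /distinct3 /= (eq_sym y x).
by case: (x != y); case: (x != z); case: (y != z).
Qed.

Lemma sum_distinct3_rot (V : nmodType) (F : T * T * T -> V) :
  (\sum_(t | distinct3 t) F (t.2, t.1.1, t.1.2) = \sum_(t | distinct3 t) F t)%R.
Proof.
apply: reindex_distinct3 => [[[? ?] ?] [[? ?] ?] [-> -> ->] //|[[x y] z]].
rewrite /distinct3 /= (eq_sym z x) (eq_sym z y).
by case: (x != y); case: (x != z); case: (y != z).
Qed.

End OrderedTriples.

Lemma ord_edge_pairsE n (e : rel 'I_n) A :
  ord_edge_pairs e A = \sum_(i in A) \sum_(j in A) e i j.
Proof.
rewrite /ord_edge_pairs pair_big_dep -sum1dep_card big_mkcondr /=.
by apply: eq_bigr => p _; case: e.
Qed.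

Definition edges3 (T : Type) (e : rel T) (t : T * T * T) : nat :=
  e t.1.1 t.1.2 + e t.1.1 t.2 + e t.1.2 t.2.

Section SumExcept.
Variables (V : zmodType) (I : finType) (F : I -> V).
Import GRing.Theory.
Local Open Scope ring_scope.

Lemma sum_except1 x : \sum_(y | x != y) F y = \sum_y F y - F x.
Proof.
rewrite [\sum_y _](bigD1 x) //= addrC addrK.
by apply: eq_bigl => y; rewrite eq_sym.
Qed.

Lemma sum_except2 x y : x != y ->
  \sum_(z | (x != z) && (y != z)) F z = \sum_z F z - F x - F y.
Proof.
move=> xy; rewrite -sum_except1 [\sum_(z | x != z) _](bigD1 y) //= addrC addrK.
by apply: eq_bigl => z; rewrite (eq_sym y).
Qed.
End SumExcept.

Section SimpleGraph.
Variables (n : nat) (e : rel 'I_n).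
Hypotheses (e_sym : symmetric e) (e_irr : irreflexive e).
Import Order.TTheory GRing.Theory Num.Theory.

Lemma ord_edge_pairs_triple t : distinct3 t ->
  ord_edge_pairs e (triple_set t) = 2 * edges3 e t.
Proof.
case: t => [[x y] z] dt.
rewrite ord_edge_pairsE !sum_triple_set // !e_irr (e_sym y x) (e_sym z x) (e_sym z y).
rewrite /edges3 /=; lia.
Qed.

Lemma six_ind3_count k :
  6 * ind3_count e k = \sum_(t | distinct3 t) (edges3 e t == k).
Proof.
rewrite /ind3_count -sum1dep_card big_mkcondr -sum_distinct3_triple_set /=.
by apply: eq_bigr => t dt; rewrite ord_edge_pairs_triple // eqn_pmul2l.
Qed.

Local Open Scope ring_scope.

Definition degree x : int := \sum_y (e x y)%:R.

Definition apex_weight x y z : int :=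
  (e x y)%:R + (e x z)%:R - 4 * (e x y)%:R * (e x z)%:R.

Lemma sum_apex_weight_z x y : x != y ->
  \sum_(z | (x != z) && (y != z)) apex_weight x y z =
  degree x + (e x y)%:R * (n%:Z + 1 - 4 * degree x).
Proof.
move=> xy; rewrite sum_except2 //.
rewrite (eq_bigr (fun z => (1 - 4 * (e x y)%:R) * (e x z)%:R + (e x y)%:R)); last first.
  by move=> z _; rewrite /apex_weight; ring.
rewrite big_split /= -mulr_sumr -/(degree x) sumr_const card_ord /apex_weight e_irr.
by case: (e x y) => /=; ring.
Qed.

Lemma sum_apex_weight x :
  \sum_(y | x != y) \sum_(z | (x != z) && (y != z)) apex_weight x y z =
  2 * n%:Z * degree x - 4 * degree x ^+ 2.
Proof.
rewrite (eq_bigr (fun y => degree x + (e x y)%:R * (n%:Z + 1 - 4 * degree x))); last first.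
  by move=> y; apply: sum_apex_weight_z.
rewrite sum_except1 big_split /= -mulr_suml -/(degree x) sumr_const card_ord e_irr /=.
ring.
Qed.

Lemma sum_apex_weight_le :
  4 * \sum_(t | distinct3 t) apex_weight t.1.1 t.1.2 t.2 <= n%:Z ^+ 3.
Proof.
rewrite sum_distinct3E /= (eq_bigr _ (fun x _ => sum_apex_weight x)) mulr_sumr.
have apex_le x : 4 * (2 * n%:Z * degree x - 4 * degree x ^+ 2) <= n%:Z ^+ 2.
  rewrite -subr_ge0.
  have -> : n%:Z ^+ 2 - 4 * (2 * n%:Z * degree x - 4 * degree x ^+ 2) =
            (n%:Z - 4 * degree x) ^+ 2 by ring.
  exact: sqr_ge0.
apply: le_trans (ler_sum _ (fun x _ => apex_le x)) _.
by rewrite sumr_const card_ord -mulr_natr natz -exprSr.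
Qed.

Lemma apex_weight_triple t :
  2 * (edges3 e t == 1)%N%:R - 6 * (edges3 e t == 3)%N%:R =
  apex_weight t.1.1 t.1.2 t.2 + apex_weight t.1.2 t.1.1 t.2 + apex_weight t.2 t.1.1 t.1.2.
Proof.
case: t => [[x y] z]; rewrite /apex_weight /edges3 /= (e_sym y x) (e_sym z x) (e_sym z y).
by case: (e x y); case: (e x z); case: (e y z).
Qed.

Lemma ind3_count_1_3 : (16 * ind3_count e 1 <= 48 * ind3_count e 3 + n ^ 3)%N.
Proof.
pose w t := apex_weight t.1.1 t.1.2 t.2.
have count_sum k : ((6 * ind3_count e k)%N%:R : int) =
    \sum_(t | distinct3 t) (edges3 e t == k)%N%:R.
  by rewrite six_ind3_count // natr_sum.
have weights : 2 * ((6 * ind3_count e 1)%N%:R : int) - 6 * (6 * ind3_count e 3)%N%:R =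
    3 * \sum_(t | distinct3 t) w t.
  rewrite !count_sum !mulr_sumr -sumrB (eq_bigr _ (fun t _ => apex_weight_triple t)).
  rewrite big_split big_split /= (sum_distinct3_swap w) (sum_distinct3_rot w).
  by rewrite -mulr_sumr; ring.
have : 4 * (2 * ((6 * ind3_count e 1)%N%:R : int) - 6 * (6 * ind3_count e 3)%N%:R)
   <= 3 * n%:Z ^+ 3.
  by rewrite weights mulrCA ler_pM2l // sum_apex_weight_le.
rewrite !natz; lia.
Qed.
End SimpleGraph.

(* [ssralg] rebinds the key [%R] to [ring_scope]; [lemma6] uses it for [R]. *)
Delimit Scope R_scope with R.
Local Open Scope R_scope.

Lemma INR_binomial3 n : 6 * INR 'C(n, 3) = INR n * (INR n - 1) * (INR n - 2).
Proof.
case: n => [|[|n]]; try by rewrite bin_small //=; lra.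
have binomial3 : ('C(n.+2, 3) * 6 = n.+2 * (n.+2 - 1) * (n.+2 - 2))%N.
  by rewrite -[6%N]/(3`!) bin_ffact !ffactnS ffactn0 /=; lia.
move/(f_equal INR): binomial3.
rewrite -!multE -!minusE !mult_INR !minus_INR; try lia.
by rewrite [INR 6]/= [INR 1]/= [INR 2]/=; lra.
Qed.

Lemma cube_le_binomial3 n : (4 <= n)%N ->
  INR n ^ 3 <= 16 * INR 'C(n, 3) * (3 / 8 + 3 / INR n).
Proof.
move=> n4; have n4R : 4 <= INR n by have := le_INR 4 n (elimT leP n4); simpl; lra.
have -> : INR 'C(n, 3) = INR n * (INR n - 1) * (INR n - 2) / 6.
  by rewrite -INR_binomial3; field.
have -> : 16 * (INR n * (INR n - 1) * (INR n - 2) / 6) * (3 / 8 + 3 / INR n) =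
          (INR n - 1) * (INR n - 2) * (INR n + 8) by field; lra.
nra.
Qed.

Lemma dens3_1_le n (e : rel 'I_n) : (4 <= n)%N -> simple_graph e ->
  dens3 e 1 <= 3 * dens3 e 3 + 3 / 8 + 3 / INR n.
Proof.
move=> n4 [e_sym e_irr].
have count_le : 16 * INR (ind3_count e 1) <= 48 * INR (ind3_count e 3) + INR n ^ 3.
  have := le_INR _ _ (elimT leP (ind3_count_1_3 e_sym e_irr)).
  by rewrite !expnS expn0 muln1 -!multE -!plusE plus_INR !mult_INR /=; lra.
have := cube_le_binomial3 n4.
rewrite /dens3; set c := INR 'C(n, 3) => cube_le.
have c_pos : 0 < c by apply: lt_0_INR; apply/ltP; rewrite bin_gt0 ltnW.
apply: (Rmult_le_reg_l (16 * c)); first lra.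
have -> : 16 * c * (INR (ind3_count e 1) / c) = 16 * INR (ind3_count e 1) by field; lra.
have -> : 16 * c * (3 * (INR (ind3_count e 3) / c) + 3 / 8 + 3 / INR n) =
          48 * INR (ind3_count e 3) + 16 * c * (3 / 8 + 3 / INR n).
  by field; split; [apply: not_0_INR; lia | lra].
lra.
Qed.

Lemma eventually_div_INR_le c eps : 0 < eps ->
  exists N : nat, forall n, (N <= n)%N -> c / INR n <= eps.
Proof.
move=> eps_pos; have [N N_gt] := INR_unbounded (Rabs c / eps).
exists N.+1 => n Nn.
have n_gt : INR N < INR n by apply: lt_INR; apply/ltP.
have n_pos : 0 < INR n by have := pos_INR N; lra.
have c_le : c <= eps * INR n.
  have : Rabs c = Rabs c / eps * eps by field; lra.
  have := Rle_abs c; move: N_gt; set r := Rabs c / eps; nra.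
apply: (Rmult_le_reg_r (INR n)) => //.
by rewrite /Rdiv Rmult_assoc Rinv_l; lra.
Qed.

Theorem lemma6 (d1 d3 : R) : inS13 d1 d3 -> (d1 <= 3 * d3 + 3 / 8)%R.
Proof.
move=> [d0 [d2 dS]]; apply: Rle_plus_epsilon => eps eps_pos.
have [N small] := @eventually_div_INR_le 3 (eps / 2) ltac:(lra).
have [n [e [Nn [g [_ [close1 [_ close3]]]]]]] := dS (eps / 8) ltac:(lra) (N + 4)%N.
have := dens3_1_le (n := n) ltac:(lia) g.
have := small n ltac:(lia).
have := Rle_abs (d1 - dens3 e 1); rewrite Rabs_minus_sym.
have := Rle_abs (dens3 e 3 - d3).
lra.
Qed.
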